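(* Let $(M,\Delta,S,\varepsilon)$ be a weak Kac algebra with target Cartan subalgebra $N_t$. For $x\in N_t$ let $L_x:N_t\to N_t$ be the linear operator $L_x(n)=xn$. Then $\varepsilon(x)=\mathrm{Tr}\,L_x$ for all $x\in N_t$, where $\mathrm{Tr}$ is the usual trace of a linear operator on the finite-dimensional space $N_t$.
   Context: All algebras are finite-dimensional over $\mathbb{C}$; $\varsigma$ denotes the flip and $\mu(x\otimes y)=xy$. A weak Kac algebra is a quadruple $(M,\Delta,S,\varepsilon)$ where $M$ is a finite-dimensional $C^*$-algebra; $\Delta:M\to M\otimes M$ is an injective, not necessarily unital, $*$-homomorphism with $(\Delta\otimes\mathrm{id})\Delta=(\mathrm{id}\otimes\Delta)\Delta$; $S:M\to M$ is a linear, unital, antimultiplicative, $*$-preserving bijection with $S^2=\mathrm{id}$ and $(S\otimes S)\circ\Delta=\varsigma\circ\Delta\circ S$; and $\varepsilon:M\to\mathbb{C}$ is linear with $(\varepsilon\otimes\mathrm{id})\Delta=(\mathrm{id}\otimes\varepsilon)\Delta=\mathrm{id}$, $\varepsilon\circ S=\varepsilon$, $\varepsilon(x^* )=\overline{\varepsilon(x)}$, $(\varepsilon\otimes\varepsilon)((x\otimes1)e(1\otimes y))=\varepsilon(xy)$ for all $x,y$, where $e:=\Delta(1)$, and $(\varepsilon_s\otimes\mathrm{id})\Delta(x)=(1\otimes x)e$ for all $x$, where $\varepsilon_s:=\mu(S\otimes\mathrm{id})\Delta$. The target Cartan subalgebra is $N_t=\{x\in M:\Delta(x)=e(x\otimes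 1)=(x\otimes1)e\}$. *)

(* Weak Kac algebras realized concretely:
   - the field C of complex numbers is Stdlib's R adjoined i (complex R, R an rcf);
   - a finite-dimensional C*-algebra M is a unital *-subalgebra of 'M[C]_n
     (every finite-dimensional C*-algebra has a faithful unital *-representation);
   - M (x) M is realized as the span of the Kronecker products a *t b (a, b in M)
     inside 'M[C]_(n*n); products in M (x) M are matrix products;
   - linear maps f (x) g, the flip, mu, eps (x) id, ... are defined on
     'M_n (x) 'M_n = 'M_(n*n) via matrix units. *)
From HB Require Import structures.
From mathcomp Require Import all_boot all_order all_algebra.
From mathcomp Require Import Rstruct.
From mathcomp Require Export complex mxtens.
Set Implicit Arguments. Unset Strict Implicit. Unset Printing Implicit Defensive.
Import GRing.Theory Num.Theory.
Local Open Scope ring_scope.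

Definition Cx : numClosedFieldType := (Rdefinitions.R)[i].

Definition adj {m p : nat} (A : 'M[Cx]_(m, p)) : 'M[Cx]_(p, m) :=
  (map_mx Num.conj A)^T.

(* coefficient of E_ij (x) E_kl in X : 'M_n (x) 'M_n = 'M_(n*n) *)
Definition tcoef {n : nat} (X : 'M[Cx]_(n * n)) (i j k l : 'I_n) : Cx :=
  X (mxtens_index (i, k)) (mxtens_index (j, l)).

Definition tensmap {n p q : nat} (f : 'M[Cx]_n -> 'M[Cx]_p)
  (g : 'M[Cx]_n -> 'M[Cx]_q) (X : 'M[Cx]_(n * n)) : 'M[Cx]_(p * q) :=
  \sum_(i < n) \sum_(j < n) \sum_(k < n) \sum_(l < n)
    tcoef X i j k l *: (f (delta_mx i j) *t g (delta_mx k l)).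

Definition flip {n : nat} (X : 'M[Cx]_(n * n)) : 'M[Cx]_(n * n) :=
  \sum_(i < n) \sum_(j < n) \sum_(k < n) \sum_(l < n)
    tcoef X i j k l *: (delta_mx k l *t delta_mx i j).

Definition mult {n : nat} (X : 'M[Cx]_(n * n)) : 'M[Cx]_n :=
  \sum_(i < n) \sum_(j < n) \sum_(k < n) \sum_(l < n)
    tcoef X i j k l *: (delta_mx i j *m delta_mx k l).

Definition tensfunL {n : nat} (phi : 'M[Cx]_n -> Cx) (X : 'M[Cx]_(n * n))
  : 'M[Cx]_n :=
  \sum_(i < n) \sum_(j < n) \sum_(k < n) \sum_(l < n)
    (tcoef X i j k l * phi (delta_mx i j)) *: delta_mx k l.
Definition tensfunR {n : nat} (phi : 'M[Cx]_n -> Cx) (X : 'M[Cx]_(n * n))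
  : 'M[Cx]_n :=
  \sum_(i < n) \sum_(j < n) \sum_(k < n) \sum_(l < n)
    (tcoef X i j k l * phi (delta_mx k l)) *: delta_mx i j.
Definition tensfun2 {n : nat} (phi : 'M[Cx]_n -> Cx) (X : 'M[Cx]_(n * n))
  : Cx :=
  \sum_(i < n) \sum_(j < n) \sum_(k < n) \sum_(l < n)
    tcoef X i j k l * phi (delta_mx i j) * phi (delta_mx k l).

Definition Mtens {n : nat} (M : {vspace 'M[Cx]_n}) : {vspace 'M[Cx]_(n * n)} :=
  <<[seq (vbasis M)`_a *t (vbasis M)`_b
       | a <- iota 0 (\dim M), b <- iota 0 (\dim M)]>>%VS.

Definition trace_on {vT : vectType Cx} (U : {vspace vT}) (f : vT -> vT) : Cx :=
  \sum_(i < \dim U) coord (vbasis U) i (f (vbasis U)`_i).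

Definition eps_s {n : nat} (Delta : 'M[Cx]_n -> 'M[Cx]_(n * n))
  (S : 'M[Cx]_n -> 'M[Cx]_n) (x : 'M[Cx]_n) : 'M[Cx]_n :=
  mult (tensmap S id (Delta x)).

Record weak_Kac {n : nat} (M : {vspace 'M[Cx]_n})
  (Delta : 'M[Cx]_n -> 'M[Cx]_(n * n)) (S : 'M[Cx]_n -> 'M[Cx]_n)
  (eps : 'M[Cx]_n -> Cx) : Prop := {
  M_one : 1%:M \in M;
  M_mul : {in M &, forall x y, x *m y \in M};
  M_adj : {in M, forall x, adj x \in M};
  (* Delta : M -> M (x) M injective, non-necessarily unital *-homomorphism *)
  D_lin : linear Delta;
  D_in : {in M, forall x, Delta x \in Mtens M};
  D_mul : {in M &, forall x y, Delta (x *m y) = Delta x *m Delta y};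
  D_adj : {in M, forall x, Delta (adj x) = adj (Delta x)};
  D_inj : {in M &, injective Delta};
  D_coass : {in M, forall x, tensmap Delta id (Delta x)
                 = castmx (mulnA n n n, mulnA n n n) (tensmap id Delta (Delta x))};
  S_lin : linear S;
  S_in : {in M, forall x, S x \in M};
  S_bij : {in M, forall y, exists2 x, x \in M & S x = y};
  S_one : S 1%:M = 1%:M;
  S_anti : {in M &, forall x y, S (x *m y) = S y *m S x};
  S_adj : {in M, forall x, S (adj x) = adj (S x)};
  S_invol : {in M, forall x, S (S x) = x};
  S_coinv : {in M, forall x, tensmap S S (Delta x) = flip (Delta (S x))};
  e_lin : scalar eps;
  e_counitL : {in M, forall x, tensfunL eps (Delta x) = x};
  e_counitR : {in M, forall x, tensfunR eps (Delta x) = x};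
  e_S : {in M, forall x, eps (S x) = eps x};
  e_adj : {in M, forall x, eps (adj x) = Num.conj (eps x)};
  e_mult : {in M &, forall x y,
     tensfun2 eps ((x *t 1%:M) *m Delta 1%:M *m (1%:M *t y)) = eps (x *m y)};
  e_s : {in M, forall x,
     tensmap (eps_s Delta S) id (Delta x) = (1%:M *t x) *m Delta 1%:M}
}.

Definition in_Nt {n : nat} (M : {vspace 'M[Cx]_n})
  (Delta : 'M[Cx]_n -> 'M[Cx]_(n * n)) (x : 'M[Cx]_n) : Prop :=
  x \in M /\ Delta x = Delta 1%:M *m (x *t 1%:M)
          /\ Delta x = (x *t 1%:M) *m Delta 1%:M.

From Pilot Require Import Defs.
From HB Require Import structures.
From mathcomp Require Import all_boot all_order all_algebra.
From mathcomp Require Import complex mxtens.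
Import GRing.Theory Num.Theory.
Local Open Scope ring_scope.

(* Write e := Delta 1 = \sum_(i,j) E_ij (x) Q_ij with Q_ij := leg2 i j e, and use
   flip e = (S (x) S) e throughout.
   - \sum_(i,j) Q_ij S(E_ij) = mu ((S (x) id) e) = eps_s 1 = 1.
   - Each Q_ij lies in N_t: coassociativity gives Delta P = (1 (x) P) e for every
     slice P = (id (x) psi) e, the antipode turns Q_ij into such a slice and this
     relation into Delta Q_ij = e (Q_ij (x) 1), and the adjoint gives the other one.
   - For z in N_t, \sum_(i,j) eps (z S(E_ij)) Q_ij = S (eps_s z) = S (S z) = z.
   So the Q_ij and the functionals z |-> eps (z S(E_ij)) resolve the identity of
   N_t, whence Tr L_x = \sum_(i,j) eps (x Q_ij S(E_ij)) = eps x. *)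

Set Implicit Arguments. Unset Strict Implicit. Unset Printing Implicit Defensive.

Section TraceResolution.
Variables (vT : vectType Cx) (U : {vspace vT}) (f : {linear vT -> vT}).
Variables (I : finType) (q : I -> vT) (phi : I -> {scalar vT}).

Lemma trace_on_resolution :
  {in U, forall u, f u \in U} -> (forall i, q i \in U) ->
  {in U, forall u, u = \sum_i phi i u *: q i} ->
  trace_on U f = \sum_i phi i (f (q i)).
Proof.
move=> fU qU U_expand; rewrite /trace_on.
have bU (t : 'I_(\dim U)) : (vbasis U)`_t \in U.
  by apply: vbasis_mem; apply: mem_nth; rewrite size_tuple.
transitivity (\sum_(t < \dim U) \sum_i
    phi i (f (vbasis U)`_t) * coord (vbasis U) t (q i)).
  apply: eq_bigr => t _; rewrite {1}(U_expand _ (fU _ (bU t))) linear_sum.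
  by apply: eq_bigr => i _; rewrite linearZ.
rewrite exchange_big; apply: eq_bigr => i _.
rewrite [q i in RHS](coord_vbasis (qU i)) !linear_sum; apply: eq_bigr => t _.
by rewrite !linearZ /= mulrC.
Qed.
End TraceResolution.

Section TensorProduct.
Variables m p q r : nat.

Lemma tensmx_suml I (s : seq I) (P : pred I) (F : I -> 'M[Cx]_(m, p))
    (B : 'M[Cx]_(q, r)) :
  (\sum_(i <- s | P i) F i) *t B = \sum_(i <- s | P i) (F i *t B).
Proof.
apply: (big_morph (fun A => A *t B)); last exact: tens0mx.
by move=> A A'; apply/matrixP => i j; rewrite !mxE mulrDl.
Qed.

Lemma tensmxZl c (A : 'M[Cx]_(m, p)) (B : 'M[Cx]_(q, r)) :
  (c *: A) *t B = c *: (A *t B).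
Proof. by apply/matrixP => i j; rewrite !mxE mulrA. Qed.

Lemma tensmx_is_linear (A : 'M[Cx]_(m, p)) : linear (@tensmx _ _ _ q r A).
Proof. by move=> c B B'; apply/matrixP => i j; rewrite !mxE mulrDr mulrCA. Qed.

HB.instance Definition _ A := GRing.isLinear.Build Cx 'M[Cx]_(q, r)
  'M[Cx]_(m * q, p * r) _ (tensmx A) (tensmx_is_linear A).

End TensorProduct.

Lemma castmx_is_linear m p m' p' (eq_mp : (m = m') * (p = p')) :
  linear (@castmx Cx m p m' p' eq_mp).
Proof. by move=> c A B; apply/matrixP => i j; rewrite !(castmxE, mxE). Qed.
HB.instance Definition _ m p m' p' eq_mp := GRing.isLinear.Build Cx 'M[Cx]_(m, p)
  'M[Cx]_(m', p') _ _ (@castmx_is_linear m p m' p' eq_mp).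

Lemma tensmxA n (a b c : 'M[Cx]_n) :
  castmx (mulnA n n n, mulnA n n n) (a *t (b *t c)) = (a *t b) *t c.
Proof.
apply/matrixP => I J.
case: (mxtens_indexP I) => I1 i3; case: (mxtens_indexP J) => J1 j3.
case: (mxtens_indexP I1) => i1 i2; case: (mxtens_indexP J1) => j1 j2.
have castE (e : n * (n * n) = n * n * n) (x y z : 'I_n) :
    cast_ord (esym e) (mxtens_index (mxtens_index (x, y), z))
    = mxtens_index (x, mxtens_index (y, z)).
  by apply: val_inj => /=; rewrite mulnDl -mulnA addnA.
by rewrite castmxE !tensmxE !castE !tensmxE mulrA.
Qed.

Lemma tensmx11 m p : (1%:M : 'M[Cx]_m) *t (1%:M : 'M[Cx]_p) = 1%:M.
Proof.
apply/matrixP => r s.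
case: (mxtens_indexP r) => r1 r2; case: (mxtens_indexP s) => s1 s2.
rewrite tensmxE !mxE (inj_eq (can_inj (@mxtens_indexK m p))) xpair_eqE.
by case: (r1 == s1); case: (r2 == s2); rewrite ?mulr0 ?mul0r ?mulr1.
Qed.

Lemma adj_mul m p q (A : 'M[Cx]_(m, p)) (B : 'M[Cx]_(p, q)) :
  adj (A *m B) = adj B *m adj A.
Proof. by rewrite /adj map_mxM trmx_mul. Qed.

Lemma adj_tens m p q r (A : 'M[Cx]_(m, p)) (B : 'M[Cx]_(q, r)) :
  adj (A *t B) = adj A *t adj B.
Proof. by rewrite /adj map_mxT trmx_tens. Qed.

Lemma adj1 m : adj (1%:M : 'M[Cx]_m) = 1%:M.
Proof. by rewrite /adj map_mx1 trmx1. Qed.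

Section TensorLegs.
Variable n : nat.
Local Notation E := (@delta_mx Cx n n).
Local Notation MM := 'M[Cx]_(n * n).

Lemma tcoef_tens (a b : 'M[Cx]_n) i j k l :
  tcoef (a *t b) i j k l = a i j * b k l.
Proof. by rewrite /tcoef tensmxE. Qed.

Lemma tens_delta_mx (i j k l : 'I_n) :
  E i j *t E k l = delta_mx (mxtens_index (i, k)) (mxtens_index (j, l)) :> MM.
Proof.
apply/matrixP => r s.
case: (mxtens_indexP r) => r1 r2; case: (mxtens_indexP s) => s1 s2.
rewrite tensmxE !mxE !(inj_eq (can_inj (@mxtens_indexK n n))) !xpair_eqE.
by case: (r1 == i); case: (s1 == j); case: (r2 == k); case: (s2 == l);
  rewrite ?mulr0 ?mul0r ?mulr1.
Qed.

Lemma big_mxtens_index (V : nmodType) (F : 'I_(n * n) -> V) :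
  \sum_(r < n * n) F r = \sum_(i < n) \sum_(k < n) F (mxtens_index (i, k)).
Proof.
rewrite pair_big /= (reindex (@mxtens_index n n)) /=; first by apply: eq_bigr => -[].
by exists (@mxtens_unindex n n) => x _; [exact: mxtens_indexK | exact: mxtens_unindexK].
Qed.

Lemma tensmx_sum_delta (X : MM) :
  X = \sum_i \sum_j \sum_k \sum_l tcoef X i j k l *: (E i j *t E k l).
Proof.
rewrite {1}[X]matrix_sum_delta big_mxtens_index; apply: eq_bigr => i _.
under eq_bigr => k _ do rewrite big_mxtens_index.
rewrite exchange_big /=; apply: eq_bigr => j _.
by apply: eq_bigr => k _; apply: eq_bigr => l _; rewrite tens_delta_mx.
Qed.

Lemma linear_tcoef_sum (V : lmodType Cx)
    (a : MM -> 'I_n -> 'I_n -> 'I_n -> 'I_n -> Cx)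
    (W : 'I_n -> 'I_n -> 'I_n -> 'I_n -> V) :
  (forall i j k l, scalar (fun X => a X i j k l)) ->
  linear (fun X => \sum_i \sum_j \sum_k \sum_l a X i j k l *: W i j k l).
Proof.
move=> a_lin c X Y; rewrite scaler_sumr -big_split; apply: eq_bigr => i _.
rewrite scaler_sumr -big_split; apply: eq_bigr => j _.
rewrite scaler_sumr -big_split; apply: eq_bigr => k _.
rewrite scaler_sumr -big_split; apply: eq_bigr => l _.
by rewrite a_lin scalerDl scalerA.
Qed.

Lemma tcoef_is_scalar i j k l : scalar (fun X : MM => tcoef X i j k l).
Proof. by move=> c X Y; rewrite /tcoef !mxE. Qed.

Lemma tcoef_mulr_is_scalar i j k l (w : Cx) :
  scalar (fun X : MM => tcoef X i j k l * w).
Proof. by move=> c X Y; rewrite tcoef_is_scalar mulrDl mulrA. Qed.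

Lemma tensmap_is_linear p q (f : 'M[Cx]_n -> 'M[Cx]_p) (g : 'M[Cx]_n -> 'M[Cx]_q) :
  linear (tensmap f g).
Proof. exact: linear_tcoef_sum tcoef_is_scalar. Qed.
HB.instance Definition _ p q f g := GRing.isLinear.Build Cx MM _ _ _
  (@tensmap_is_linear p q f g).

Lemma flip_is_linear : linear (@flip n).
Proof. exact: linear_tcoef_sum tcoef_is_scalar. Qed.
HB.instance Definition _ := GRing.isLinear.Build Cx MM MM _ _ flip_is_linear.

Lemma mult_is_linear : linear (@mult n).
Proof. exact: linear_tcoef_sum tcoef_is_scalar. Qed.
HB.instance Definition _ := GRing.isLinear.Build Cx MM _ _ _ mult_is_linear.

Lemma tensfunL_is_linear phi : linear (@tensfunL n phi).
Proof. by apply: linear_tcoef_sum => *; apply: tcoef_mulr_is_scalar. Qed.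
HB.instance Definition _ phi := GRing.isLinear.Build Cx MM _ _ _
  (tensfunL_is_linear phi).

Lemma tensfunR_is_linear phi : linear (@tensfunR n phi).
Proof. by apply: linear_tcoef_sum => *; apply: tcoef_mulr_is_scalar. Qed.
HB.instance Definition _ phi := GRing.isLinear.Build Cx MM _ _ _
  (tensfunR_is_linear phi).

Lemma linear_tens_ext (V : lmodType Cx) (F G : {linear MM -> V}) :
  (forall a b, F (a *t b) = G (a *t b)) -> F =1 G.
Proof.
move=> FG X; rewrite [X]tensmx_sum_delta !linear_sum; apply: eq_bigr => i _.
rewrite !linear_sum; apply: eq_bigr => j _; rewrite !linear_sum.
by apply: eq_bigr => k _; rewrite !linear_sum; apply: eq_bigr => l _; rewrite !linearZ FG.
Qed.
Arguments linear_tens_ext {V} F G.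

Lemma flip_tens (a b : 'M[Cx]_n) : flip (a *t b) = b *t a.
Proof.
rewrite /flip [in RHS](matrix_sum_delta a) linear_sum; apply: eq_bigr => i _.
rewrite linear_sum; apply: eq_bigr => j _.
rewrite [in RHS](matrix_sum_delta b) linearZ /= tensmx_suml scaler_sumr.
apply: eq_bigr => k _; rewrite tensmx_suml scaler_sumr; apply: eq_bigr => l _.
by rewrite tensmxZl scalerA tcoef_tens mulrC.
Qed.

Lemma mult_tens (a b : 'M[Cx]_n) : mult (a *t b) = a *m b.
Proof.
rewrite /mult [in RHS](matrix_sum_delta a) mulmx_suml; apply: eq_bigr => i _.
rewrite mulmx_suml; apply: eq_bigr => j _.
rewrite [in RHS](matrix_sum_delta b) -scalemxAl mulmx_sumr scaler_sumr.
apply: eq_bigr => k _; rewrite mulmx_sumr scaler_sumr; apply: eq_bigr => l _.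
by rewrite -scalemxAr scalerA tcoef_tens.
Qed.

Lemma linear_delta_sum (V : zmodType) (s : GRing.Scale.law Cx V)
    (F : {linear 'M[Cx]_n -> V | s}) a :
  F a = \sum_i \sum_j s (a i j) (F (E i j)).
Proof.
rewrite {1}[a]matrix_sum_delta linear_sum; apply: eq_bigr => i _.
by rewrite linear_sum; apply: eq_bigr => j _; rewrite linearZ.
Qed.

Section SimpleTensors.
Variables (p q : nat) (f : 'M[Cx]_n -> 'M[Cx]_p) (g : 'M[Cx]_n -> 'M[Cx]_q).
Variable phi : 'M[Cx]_n -> Cx.
Hypotheses (f_lin : linear f) (g_lin : linear g) (phi_lin : scalar phi).
#[local] HB.instance Definition _ := GRing.isLinear.Build Cx _ _ _ f f_lin.
#[local] HB.instance Definition _ := GRing.isLinear.Build Cx _ _ _ g g_lin.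
#[local] HB.instance Definition _ := GRing.isLinear.Build Cx _ _ _ phi phi_lin.

Lemma scalar_delta_sum a : phi a = \sum_i \sum_j a i j * phi (E i j).
Proof. exact: linear_delta_sum. Qed.

Lemma tensmap_tens (a b : 'M[Cx]_n) : tensmap f g (a *t b) = f a *t g b.
Proof.
rewrite [f a]linear_delta_sum [g b]linear_delta_sum tensmx_suml.
apply: eq_bigr => i _; rewrite tensmx_suml; apply: eq_bigr => j _.
rewrite tensmxZl linear_sum scaler_sumr; apply: eq_bigr => k _.
rewrite linear_sum scaler_sumr; apply: eq_bigr => l _.
by rewrite linearZ /= scalerA tcoef_tens.
Qed.

Lemma tensfunL_tens (a b : 'M[Cx]_n) : tensfunL phi (a *t b) = phi a *: b.
Proof.
rewrite /tensfunL [phi a]scalar_delta_sum scaler_suml; apply: eq_bigr => i _.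
rewrite scaler_suml; apply: eq_bigr => j _.
rewrite [in RHS](matrix_sum_delta b) scaler_sumr; apply: eq_bigr => k _.
rewrite scaler_sumr; apply: eq_bigr => l _.
by rewrite scalerA tcoef_tens mulrAC.
Qed.

Lemma tensfunR_tens (a b : 'M[Cx]_n) : tensfunR phi (a *t b) = phi b *: a.
Proof.
rewrite /tensfunR [phi b]scalar_delta_sum [a in RHS]matrix_sum_delta.
rewrite scaler_sumr; apply: eq_bigr => i _; rewrite scaler_sumr; apply: eq_bigr => j _.
rewrite scaler_suml; apply: eq_bigr => k _; rewrite scaler_suml; apply: eq_bigr => l _.
by rewrite scalerA tcoef_tens [_ * a i j]mulrC mulrA.
Qed.

End SimpleTensors.

Lemma flipK (X : MM) : flip (flip X) = X.
Proof.
move: X; apply: (linear_tens_ext (flip \o flip) idfun) => a b /=.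
by rewrite !flip_tens.
Qed.

Lemma flipM (X Y : MM) : flip (X *m Y) = flip X *m flip Y.
Proof.
move: X; apply: (linear_tens_ext (flip \o mulmxr Y) (mulmxr (flip Y) \o flip)).
move=> a b /=; rewrite flip_tens; move: Y.
apply: (linear_tens_ext (flip \o mulmx (a *t b)) (mulmx (b *t a) \o flip)) => c d /=.
by rewrite tensmx_mul !flip_tens tensmx_mul.
Qed.

Lemma mult_tensmx1_mul (a : 'M[Cx]_n) (X : MM) :
  mult ((a *t 1%:M) *m X) = a *m mult X.
Proof.
move: X; apply: (linear_tens_ext (mult \o mulmx (a *t 1%:M)) (mulmx a \o mult)).
by move=> b c /=; rewrite tensmx_mul mul1mx !mult_tens mulmxA.
Qed.

(* [X = \sum_(i, j) E i j *t leg2 i j X] *)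
Definition leg2 (i j : 'I_n) (X : MM) : 'M[Cx]_n := \matrix_(k, l) tcoef X i j k l.

Lemma leg2_is_linear i j : linear (leg2 i j).
Proof. by move=> c X Y; apply/matrixP => k l; rewrite !mxE /tcoef !mxE. Qed.
HB.instance Definition _ i j := GRing.isLinear.Build Cx MM _ _ _ (leg2_is_linear i j).

Lemma leg2_adj i j (X : MM) : leg2 i j (adj X) = adj (leg2 j i X).
Proof. by apply/matrixP => k l; rewrite /adj !mxE /tcoef !mxE. Qed.

Lemma mxcoord_is_scalar i j : scalar (fun w : 'M[Cx]_n => w i j).
Proof. by move=> c v w; rewrite !mxE. Qed.

Lemma leg2E i j (X : MM) : leg2 i j X = tensfunL (fun w => w i j) X.
Proof.
move: X; apply: (linear_tens_ext (leg2 i j) (tensfunL _)) => a b /=.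
rewrite tensfunL_tens; last exact: mxcoord_is_scalar.
by apply/matrixP => k l; rewrite !mxE tcoef_tens.
Qed.

Lemma tensfunL_leg2 phi (X : MM) :
  tensfunL phi X = \sum_i \sum_j phi (E i j) *: leg2 i j X.
Proof.
apply: eq_bigr => i _; apply: eq_bigr => j _.
rewrite [leg2 i j X]matrix_sum_delta scaler_sumr; apply: eq_bigr => k _.
by rewrite scaler_sumr; apply: eq_bigr => l _; rewrite mxE scalerA mulrC.
Qed.

Lemma sum_leg2_mul (g : 'M[Cx]_n -> 'M[Cx]_n) (X : MM) :
  \sum_i \sum_j leg2 i j X *m g (E i j) = mult (flip (tensmap g id X)).
Proof.
rewrite /tensmap (linear_sum flip) (linear_sum mult); apply: eq_bigr => i _.
rewrite (linear_sum flip) (linear_sum mult); apply: eq_bigr => j _.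
rewrite [leg2 i j X]matrix_sum_delta mulmx_suml (linear_sum flip) (linear_sum mult).
apply: eq_bigr => k _; rewrite mulmx_suml (linear_sum flip) (linear_sum mult).
apply: eq_bigr => l _; rewrite !linearZ /=.
by rewrite flip_tens mult_tens mxE -scalemxAl.
Qed.

(* [id (x) psi] on ['M_m (x) 'M_n]; with [m = n * n] it slices off a third leg. *)
Definition sliceR m (psi : 'M[Cx]_n -> Cx) (Y : 'M[Cx]_(m * n)) : 'M[Cx]_m :=
  \matrix_(r, s) \sum_k \sum_l
    psi (E k l) * Y (mxtens_index (r, k)) (mxtens_index (s, l)).

Lemma sliceR_is_linear m psi : linear (@sliceR m psi).
Proof.
move=> c X Y; apply/matrixP => r s; rewrite !mxE mulr_sumr -big_split.
apply: eq_bigr => k _; rewrite mulr_sumr -big_split; apply: eq_bigr => l _.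
by rewrite !mxE mulrDr mulrCA.
Qed.
HB.instance Definition _ m psi := GRing.isLinear.Build Cx 'M[Cx]_(m * n) _ _ _
  (@sliceR_is_linear m psi).

Section LinearLegIdentities.
Variables (f g f' g' : 'M[Cx]_n -> 'M[Cx]_n) (phi : 'M[Cx]_n -> Cx).
Variable Delta : 'M[Cx]_n -> MM.
Hypotheses (f_lin : linear f) (g_lin : linear g) (Delta_lin : linear Delta).
Hypotheses (f'_lin : linear f') (g'_lin : linear g') (phi_lin : scalar phi).
#[local] HB.instance Definition _ := GRing.isLinear.Build Cx _ _ _ f f_lin.
#[local] HB.instance Definition _ := GRing.isLinear.Build Cx _ _ _ g g_lin.
#[local] HB.instance Definition _ := GRing.isLinear.Build Cx _ _ _ f' f'_lin.
#[local] HB.instance Definition _ := GRing.isLinear.Build Cx _ _ _ g' g'_lin.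
#[local] HB.instance Definition _ := GRing.isLinear.Build Cx _ _ _ phi phi_lin.
#[local] HB.instance Definition _ := GRing.isLinear.Build Cx _ _ _ Delta Delta_lin.

Lemma tensmap_comp (X : MM) :
  tensmap f g (tensmap f' g' X) = tensmap (f \o f') (g \o g') X.
Proof.
move: X; apply: (linear_tens_ext (tensmap f g \o tensmap f' g')) => a b /=.
by rewrite !tensmap_tens //; apply: linearP.
Qed.

Lemma flip_tensmap (X : MM) : flip (tensmap f g X) = tensmap g f (flip X).
Proof.
move: X; apply: (linear_tens_ext (flip \o tensmap f g) (tensmap g f \o flip)).
by move=> a b /=; rewrite tensmap_tens // !flip_tens tensmap_tens.
Qed.

Lemma tensfunR_tensmap (X : MM) :
  tensfunR phi (tensmap f g X) = f (tensfunR (phi \o g) X).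
Proof.
move: X; apply: (linear_tens_ext (tensfunR phi \o tensmap f g)
  (f \o tensfunR (phi \o g))) => a b /=.
by rewrite tensmap_tens // !tensfunR_tens ?linearZ //; apply: linearP.
Qed.

Lemma tensfunL_flip (X : MM) : tensfunL phi X = tensfunR phi (flip X).
Proof.
move: X; apply: (linear_tens_ext (tensfunL phi) (tensfunR phi \o flip)).
by move=> a b /=; rewrite flip_tens tensfunL_tens // tensfunR_tens.
Qed.

Lemma tensfunR_1tensmx_mul (z : 'M[Cx]_n) (X : MM) :
  tensfunR phi ((1%:M *t z) *m X) = tensfunR (phi \o mulmx z) X.
Proof.
move: X; apply: (linear_tens_ext (tensfunR phi \o mulmx (1%:M *t z))) => a b /=.
by rewrite tensmx_mul mul1mx !tensfunR_tens //; apply: linearP.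
Qed.

Lemma sliceR_tens m (a : 'M[Cx]_m) (b : 'M[Cx]_n) : sliceR phi (a *t b) = phi b *: a.
Proof.
apply/matrixP => r s; rewrite !mxE (scalar_delta_sum phi_lin b) mulr_suml.
apply: eq_bigr => k _; rewrite mulr_suml; apply: eq_bigr => l _.
by rewrite tensmxE mulrCA [RHS]mulrC [in RHS](mulrC (b k l)).
Qed.

Lemma sliceR_castA_tens (a : 'M[Cx]_n) (X : MM) :
  sliceR phi (castmx (mulnA n n n, mulnA n n n) (a *t X)) = a *t tensfunR phi X.
Proof.
move: X; apply: (linear_tens_ext (sliceR phi \o castmx _ \o tensmx a)
  (tensmx a \o tensfunR phi)) => b c /=.
by rewrite tensmxA sliceR_tens tensfunR_tens // linearZ.
Qed.

Lemma sliceR_tensmapl (X : MM) :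
  sliceR phi (tensmap Delta id X) = Delta (tensfunR phi X).
Proof.
move: X; apply: (linear_tens_ext (sliceR phi \o tensmap Delta _)
  (Delta \o tensfunR phi)) => a b /=.
by rewrite tensmap_tens // sliceR_tens tensfunR_tens // linearZ.
Qed.

Lemma sliceR_tensmapr (X : MM) :
  sliceR phi (castmx (mulnA n n n, mulnA n n n) (tensmap id Delta X))
  = tensmap id (tensfunR phi \o Delta) X.
Proof.
move: X; apply: (linear_tens_ext (sliceR phi \o castmx _ \o tensmap _ Delta)
  (tensmap _ (tensfunR phi \o Delta))) => a b /=.
have phiDelta_lin : linear (tensfunR phi \o Delta) by exact: linearP.
by rewrite !tensmap_tens // sliceR_castA_tens.
Qed.

End LinearLegIdentities.

End TensorLegs.

Section TensorSquare.
Variables (n : nat) (M : {vspace 'M[Cx]_n}).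
Local Notation MM := 'M[Cx]_(n * n).

Lemma Mtens_ind (P : MM -> Prop) :
  P 0 -> (forall X Y, P X -> P Y -> P (X + Y)) -> (forall c X, P X -> P (c *: X)) ->
  (forall a b, a \in M -> b \in M -> P (a *t b)) -> {in Mtens M, forall X, P X}.
Proof.
move=> P0 PD PZ Ptens X; rewrite /Mtens => /(@coord_span _ _ _ (in_tuple _)) ->.
apply: big_ind => // i _; apply: PZ.
set s := [seq _ | a <- _, b <- _].
have : (in_tuple s)`_i \in s by apply: mem_nth.
case/allpairsP => -[a b] /= [ha hb ->]; rewrite !mem_iota /= in ha hb.
by apply: Ptens; apply: vbasis_mem; apply: mem_nth; rewrite size_tuple.
Qed.

Lemma linear_Mtens_ext (V : lmodType Cx) (F G : {linear MM -> V}) :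
  (forall a b, a \in M -> b \in M -> F (a *t b) = G (a *t b)) ->
  {in Mtens M, F =1 G}.
Proof.
move=> FG; apply: Mtens_ind => [|X Y FGX FGY|c X FGX|//].
- by rewrite !linear0.
- by rewrite !linearD FGX FGY.
- by rewrite !linearZ FGX.
Qed.

Lemma linear_Mtens_mem (F : {linear MM -> 'M[Cx]_n}) :
  (forall a b, a \in M -> b \in M -> F (a *t b) \in M) ->
  {in Mtens M, forall X, F X \in M}.
Proof.
move=> FM; apply: Mtens_ind => [|X Y XM YM|c X XM|//].
- by rewrite linear0 mem0v.
- by rewrite linearD; apply: memvD.
- by rewrite linearZ; apply: memvZ.
Qed.

Lemma tensfunL_Mtens_mem phi : scalar phi ->
  {in Mtens M, forall X, tensfunL phi X \in M}.
Proof.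
move=> phi_lin; apply: linear_Mtens_mem => a b _ bM /=.
by rewrite tensfunL_tens //; apply: memvZ.
Qed.

Lemma tensfunR_Mtens_mem phi : scalar phi ->
  {in Mtens M, forall X, tensfunR phi X \in M}.
Proof.
move=> phi_lin; apply: linear_Mtens_mem => a b aM _ /=.
by rewrite tensfunR_tens //; apply: memvZ.
Qed.

End TensorSquare.

Arguments linear_Mtens_ext {n M V} F G.

Section WeakKac.
Variables (n : nat) (M : {vspace 'M[Cx]_n}) (Delta : 'M[Cx]_n -> 'M[Cx]_(n * n)).
Variables (S : 'M[Cx]_n -> 'M[Cx]_n) (eps : 'M[Cx]_n -> Cx).
Hypothesis wK : weak_Kac M Delta S eps.
Local Notation E := (@delta_mx Cx n n).
Local Notation e := (Delta 1%:M).
Local Notation eps_s := (eps_s Delta S).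

#[local] HB.instance Definition _ := GRing.isLinear.Build Cx _ _ _ Delta (D_lin wK).
#[local] HB.instance Definition _ := GRing.isLinear.Build Cx _ _ _ S (S_lin wK).
#[local] HB.instance Definition _ := GRing.isLinear.Build Cx _ _ _ eps (e_lin wK).

Let Delta_linear : linear Delta := D_lin wK.
Let S_linear : linear S := S_lin wK.
Let eps_scalar : scalar eps := e_lin wK.
Let one_M : 1%:M \in M := M_one wK.

Lemma e_Mtens : e \in Mtens M.
Proof. exact: (D_in wK one_M). Qed.

Lemma eps_s_is_linear : linear eps_s.
Proof. exact: (linearP (mult \o tensmap S id \o Delta)). Qed.
#[local] HB.instance Definition _ := GRing.isLinear.Build Cx _ _ _ eps_s eps_s_is_linear.

Lemma tensmap_eps_s_e : tensmap eps_s id e = e.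
Proof. by rewrite (e_s wK one_M) tensmx11 mul1mx. Qed.

Lemma eps_s1 : eps_s 1%:M = 1%:M.
Proof.
have := congr1 (tensfunR eps) tensmap_eps_s_e.
rewrite tensfunR_tensmap //; last exact: linearP.
by rewrite (_ : eps \o id = eps) // (e_counitR wK one_M).
Qed.

Lemma eps_sE z : z \in M -> eps_s z = tensfunR (eps \o mulmx z) e.
Proof.
move=> zM; have := congr1 (tensfunR eps) (e_s wK zM).
rewrite tensfunR_tensmap //; last exact: linearP.
by rewrite (_ : eps \o id = eps) // (e_counitR wK zM) tensfunR_1tensmx_mul.
Qed.

Lemma tensmapS_mul_tensmx1 z : z \in M -> {in Mtens M, forall X,
  tensmap S id (X *m (z *t 1%:M)) = (S z *t 1%:M) *m tensmap S id X}.
Proof.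
move=> zM; apply: (linear_Mtens_ext (tensmap S id \o mulmxr (z *t 1%:M))
  (mulmx (S z *t 1%:M) \o tensmap S id)) => a b aM bM /=.
by rewrite tensmx_mul mulmx1 !tensmap_tens // tensmx_mul mul1mx (S_anti wK).
Qed.

Lemma tensmapSS_1tensmx_mul z : z \in M -> {in Mtens M, forall X,
  tensmap S S ((1%:M *t z) *m X) = tensmap S S X *m (1%:M *t S z)}.
Proof.
move=> zM; apply: (linear_Mtens_ext (tensmap S S \o mulmx (1%:M *t z))
  (mulmxr (1%:M *t S z) \o tensmap S S)) => a b aM bM /=.
by rewrite tensmx_mul mul1mx !tensmap_tens // tensmx_mul mulmx1 (S_anti wK).
Qed.

Lemma eps_s_Nt z : z \in M -> Delta z = e *m (z *t 1%:M) -> eps_s z = S z.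
Proof.
move=> zM Dz; rewrite {1}/Defs.eps_s Dz tensmapS_mul_tensmx1 ?e_Mtens //.
by rewrite mult_tensmx1_mul -/(eps_s 1%:M) eps_s1 mulmx1.
Qed.

Lemma flip_e : flip e = tensmap S S e.
Proof. by rewrite (S_coinv wK one_M) (S_one wK). Qed.

Lemma flip_tensmapS_e : flip (tensmap S id e) = tensmap S id e.
Proof.
rewrite flip_tensmap // flip_e tensmap_comp //.
apply: (linear_Mtens_ext (tensmap _ _) (tensmap _ _)) e_Mtens => a b aM bM /=.
rewrite !tensmap_tens /= ?(S_invol wK bM) //; exact: linearP.
Qed.

Lemma sum_leg2_e_S : \sum_i \sum_j leg2 i j e *m S (E i j) = 1%:M.
Proof. by rewrite sum_leg2_mul flip_tensmapS_e -/(eps_s 1%:M) eps_s1. Qed.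

Lemma Delta_tensfunR_e psi : scalar psi ->
  Delta (tensfunR psi e) = (1%:M *t tensfunR psi e) *m e.
Proof.
move=> psi_lin; have PM := tensfunR_Mtens_mem psi_lin e_Mtens.
(* coassociativity at 1, sliced by [id (x) id (x) psi] *)
have coass : Delta (tensfunR psi e) = tensmap id (tensfunR psi \o Delta) e.
  by rewrite -sliceR_tensmapl // (D_coass wK one_M) sliceR_tensmapr.
have h_lin : linear (tensfunR psi \o Delta) by exact: linearP.
have eps_s_lin := eps_s_is_linear.
rewrite -(e_s wK PM) coass tensmap_comp //.
by rewrite -[in LHS]tensmap_eps_s_e tensmap_comp.
Qed.

Lemma leg2_e_S i j : leg2 i j e = S (tensfunR ((fun w => w i j) \o S) e).
Proof.
rewrite leg2E tensfunL_flip ?flip_e ?tensfunR_tensmap //; exact: mxcoord_is_scalar.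
Qed.

Lemma leg2_e_mem i j : leg2 i j e \in M.
Proof. by rewrite leg2E tensfunL_Mtens_mem ?e_Mtens //; exact: mxcoord_is_scalar. Qed.

Lemma Delta_leg2_e_l i j : Delta (leg2 i j e) = e *m (leg2 i j e *t 1%:M).
Proof.
have psi_lin : scalar ((fun w => w i j) \o S).
  by move=> c u v; rewrite /= linearP !mxE.
rewrite leg2_e_S; have PM := tensfunR_Mtens_mem psi_lin e_Mtens.
rewrite -[Delta _]flipK -(S_coinv wK PM) Delta_tensfunR_e //.
by rewrite tensmapSS_1tensmx_mul ?e_Mtens // -flip_e flipM flipK flip_tens.
Qed.

Lemma adj_e : adj e = e.
Proof. by rewrite -(D_adj wK one_M) adj1. Qed.

Lemma Delta_leg2_e_r i j : Delta (leg2 i j e) = (leg2 i j e *t 1%:M) *m e.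
Proof.
have -> : leg2 i j e = adj (leg2 j i e) by rewrite -leg2_adj adj_e.
rewrite (D_adj wK) ?leg2_e_mem // Delta_leg2_e_l.
by rewrite adj_mul adj_tens adj1 adj_e.
Qed.

Lemma leg2_e_Nt i j : in_Nt M Delta (leg2 i j e).
Proof.
by split; [exact: leg2_e_mem | split; [exact: Delta_leg2_e_l | exact: Delta_leg2_e_r]].
Qed.

Lemma in_Nt_mul x y : in_Nt M Delta x -> in_Nt M Delta y -> in_Nt M Delta (x *m y).
Proof.
move=> [xM [Dx1 Dx2]] [yM [Dy1 Dy2]]; split; first exact: (M_mul wK).
rewrite (D_mul wK) //; split.
- by rewrite Dy1 mulmxA -(D_mul wK) // mulmx1 Dx1 -mulmxA tensmx_mul mulmx1.
- by rewrite Dx2 -mulmxA -(D_mul wK) // mul1mx Dy2 mulmxA tensmx_mul mulmx1.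
Qed.

Lemma tensfunR_tensmapSS psi : scalar psi -> {in Mtens M, forall X,
  tensfunR (psi \o S) (tensmap S S X) = S (tensfunR psi X)}.
Proof.
move=> psi_lin; have psiS_lin : scalar (psi \o S).
  by move=> c u v; rewrite /= linearP psi_lin.
apply: (linear_Mtens_ext (tensfunR _ \o tensmap S S) (S \o tensfunR psi)).
move=> a b aM bM /=.
by rewrite tensmap_tens // !tensfunR_tens // linearZ /= (S_invol wK bM).
Qed.

Lemma in_Nt_expand z : in_Nt M Delta z ->
  z = \sum_i \sum_j eps (z *m S (E i j)) *: leg2 i j e.
Proof.
case=> zM [Dz _]; have phi_lin : scalar (eps \o mulmx z) by exact: linearP.
have phiS_lin : scalar (eps \o mulmx z \o S) by exact: linearP.
transitivity (tensfunL (eps \o mulmx z \o S) e); last exact: tensfunL_leg2.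
rewrite tensfunL_flip // flip_e tensfunR_tensmapSS ?e_Mtens // -eps_sE //.
by rewrite (eps_s_Nt zM Dz) (S_invol wK zM).
Qed.

Lemma eps_sum_leg2_e x : eps x = \sum_i \sum_j eps (x *m leg2 i j e *m S (E i j)).
Proof.
rewrite -{1}(mulmx1 x) -[in LHS]sum_leg2_e_S mulmx_sumr linear_sum.
apply: eq_bigr => i _; rewrite mulmx_sumr linear_sum; apply: eq_bigr => j _.
by rewrite mulmxA.
Qed.

Variable Nt : {vspace 'M[Cx]_n}.
Hypothesis NtE : forall y, y \in Nt <-> in_Nt M Delta y.

Lemma trace_Nt_mulmx x : x \in Nt ->
  trace_on Nt (mulmx x) = \sum_i \sum_j eps (x *m leg2 i j e *m S (E i j)).
Proof.
move=> /NtE xNt.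
pose phi (ij : 'I_n * 'I_n) : {scalar 'M[Cx]_n} :=
  GRing.Linear.clone _ _ _ _ (eps \o mulmxr (S (E ij.1 ij.2))) _.
rewrite (trace_on_resolution (q := fun ij => leg2 ij.1 ij.2 e) (phi := phi)).
- by rewrite pair_big; apply: eq_bigr => -[i j] _.
- by move=> y /NtE yNt; apply/NtE/in_Nt_mul.
- by move=> ij; apply/NtE/leg2_e_Nt.
by move=> y /NtE/in_Nt_expand {1}->; rewrite pair_big.
Qed.

End WeakKac.

Theorem proposition2p1p10 (n : nat) (M : {vspace 'M[Cx]_n})
  (Delta : 'M[Cx]_n -> 'M[Cx]_(n * n)) (S : 'M[Cx]_n -> 'M[Cx]_n)
  (eps : 'M[Cx]_n -> Cx) :
  weak_Kac M Delta S eps ->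
  forall Nt : {vspace 'M[Cx]_n},
  (forall y, y \in Nt <-> in_Nt M Delta y) ->
  forall x, x \in Nt -> eps x = trace_on Nt (fun y => x *m y).
Proof.
move=> wK Nt NtE x xNt.
by rewrite (eps_sum_leg2_e wK) -(trace_Nt_mulmx wK NtE xNt).
Qed.
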